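(* Let $\mathcal A\in\mathbb C^{n\times n}$ be nonsingular and suppose $\mathcal A=\mathcal P_1+\mathcal P_2$, where $\mathcal P_1,\mathcal P_2\in\mathbb C^{n\times n}$ are positive semidefinite (in the sense of the context). Let $\Sigma\in\mathbb C^{n\times n}$ be Hermitian positive definite, and let $\Gamma_{\mathrm{PPS}}$, $\tilde{\mathcal P}_1,\tilde{\mathcal P}_2,\tilde{\mathcal P}_+,\tilde{\mathcal P}_-$, $f$ and $\mathrm{ev}(\cdot)$ be as in the context. For $i=1,2$ and $x\in\mathbb C^n\setminus\{0\}$ define $$m_i(x):=f(\tilde{\mathcal P}_{3-i})\sqrt{\frac{x^*(\mathcal I+\tilde{\mathcal P}_i^*\tilde{\mathcal P}_i)x-x^*(\tilde{\mathcal P}_i+\tilde{\mathcal P}_i^* )x}{x^*(\mathcal I+\tilde{\mathcal P}_i^*\tilde{\mathcal P}_i)x+x^*(\tilde{\mathcal P}_i+\tilde{\mathcal P}_i^* )x}}.$$ Then $m_i(x)\le 1$ for $i=1,2$, and for every $\lambda\in\sigma(\Gamma_{\mathrm{PPS}})$ there exists a vector $x_\lambda\in\mathrm{ev}(\tilde{\mathcal P}_+^{-1}\tilde{\mathcal P}_-)$ such that $$|\lambda|\le\min\{m_1(x_\lambda),m_2(y_\lambda)\},\qquad y_\lambda:=(\mathcal I+\tilde{\mathcal P}_2)^{-1}(\mathcal I-\tilde{\mathcal P}_1)x_\lambda .$$ Consequently $$\rho(\Gamma_{\mathrm{PPS}})\le\max_{x_\lambda\in\mathrm{ev}(\tilde{\mathcal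 P}_+^{-1}\tilde{\mathcal P}_-)}\min\left\{m_1(x_\lambda),\,m_2\big((\mathcal I+\tilde{\mathcal P}_2)^{-1}(\mathcal I-\tilde{\mathcal P}_1)x_\lambda\big)\right\}\le 1.$$
   Context: A matrix $\mathcal P\in\mathbb C^{n\times n}$ is called positive semidefinite if $\mathcal P+\mathcal P^*$ is Hermitian positive semidefinite (HPSD), and positive definite (PD) if $\mathcal P+\mathcal P^*$ is Hermitian positive definite (HPD); $\mathcal P$ need not be Hermitian. $\mathcal I$ is the identity matrix, $\|\cdot\|$ the Euclidean (spectral) norm, $\sigma(\cdot)$ the spectrum, $\rho(\cdot)$ the spectral radius, and $\mathrm{ev}(M)$ denotes the set of all nonzero eigenvectors of a square matrix $M$. For HPD $\Sigma$, $\Sigma^{1/2}$ is its HPD square root. Given the splitting $\mathcal A=\mathcal P_1+\mathcal P_2$ and HPD $\Sigma$, the PPS iteration matrix is $\Gamma_{\mathrm{PPS}}=(\Sigma+\mathcal P_1)^{-1}(\Sigma-\mathcal P_2)(\Sigma+\mathcal P_2)^{-1}(\Sigma-\mathcal P_1)$. Set $\tilde{\mathcal P}_i=\Sigma^{-1/2}\mathcal P_i\Sigma^{-1/2}$ ($i=1,2$), $\tilde{\mathcal P}_+=(\mathcal I+\tilde{\mathcal P}_2)(\mathcal I+\tilde{\mathcal P}_1)$ and $\tilde{\mathcal P}_-=(\mathcal I-\tilde{\mathcal P}_2)(\mathcal I-\tilde{\mathcal P}_1)$. For a square matrix $\mathcal P$ with $\mathcal I+\mathcal P$ invertible, $f(\mathcal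 P):=\|(\mathcal I+\mathcal P)^{-1}(\mathcal I-\mathcal P)\|$. *)

(* complex numbers are R[i] (mathcomp-real-closed) over an
   abstract R : realType (MathComp-Analysis), so that the spectral norm and the
   spectral radius can be defined as suprema. *)
From HB Require Import structures.
From mathcomp Require Import all_boot all_order all_algebra.
From mathcomp Require Import complex.
From mathcomp Require Import boolp classical_sets reals.
Set Implicit Arguments.
Unset Strict Implicit.
Unset Printing Implicit Defensive.
Import Order.TTheory GRing.Theory Num.Theory.
Local Open Scope ring_scope.
Local Open Scope classical_set_scope.

Section Defs.
Variable R : realType.
Local Notation C := R[i].

Definition ctr (m n : nat) (A : 'M[C]_(m, n)) : 'M[C]_(n, m) :=
  (map_mx Num.conj A)^T.

Definition qform (n : nat) (A : 'M[C]_n) (x : 'cV[C]_n) : C :=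
  (ctr x *m A *m x) 0 0.

Definition hermitian (n : nat) (A : 'M[C]_n) : Prop := ctr A = A.

Definition hpsd (n : nat) (A : 'M[C]_n) : Prop :=
  hermitian A /\ forall x : 'cV[C]_n, 0 <= qform A x.
Definition hpd (n : nat) (A : 'M[C]_n) : Prop :=
  hermitian A /\ forall x : 'cV[C]_n, x != 0 -> 0 < qform A x.

(* (not necessarily Hermitian) positive semidefinite / definite, as in the paper:
   P + P^* is HPSD / HPD *)
Definition psd (n : nat) (P : 'M[C]_n) : Prop := hpsd (P + ctr P).
Definition pd (n : nat) (P : 'M[C]_n) : Prop := hpd (P + ctr P).

Definition cabs (z : C) : R := complex.Re `|z|.

Definition vnorm (n : nat) (x : 'cV[C]_n) : R :=
  Num.sqrt (\sum_(i < n) cabs (x i 0) ^+ 2).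

Definition opnorm (n : nat) (A : 'M[C]_n) : R :=
  sup [set r : R | exists2 x : 'cV[C]_n, x != 0 & r = vnorm (A *m x) / vnorm x].

Definition spectrum (n : nat) (A : 'M[C]_n) : set C := [set l | eigenvalue A l].
Definition specrad (n : nat) (A : 'M[C]_n) : R := sup [set cabs l | l in spectrum A].

Definition ev (n : nat) (M : 'M[C]_n) : set 'cV[C]_n :=
  [set x | x != 0 /\ exists mu : C, M *m x = mu *: x].

Definition fP (n : nat) (P : 'M[C]_n) : R :=
  opnorm (invmx (1%:M + P) *m (1%:M - P)).

Definition Gamma_PPS (n : nat) (Sig P1 P2 : 'M[C]_n) : 'M[C]_n :=
  invmx (Sig + P1) *m (Sig - P2) *m invmx (Sig + P2) *m (Sig - P1).

(* tilde P = Sig^{-1/2} P Sig^{-1/2}, where S = Sig^{1/2} *)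
Definition tildeP (n : nat) (S P : 'M[C]_n) : 'M[C]_n :=
  invmx S *m P *m invmx S.

Definition Pplus (n : nat) (Pt1 Pt2 : 'M[C]_n) : 'M[C]_n :=
  (1%:M + Pt2) *m (1%:M + Pt1).
Definition Pminus (n : nat) (Pt1 Pt2 : 'M[C]_n) : 'M[C]_n :=
  (1%:M - Pt2) *m (1%:M - Pt1).

(* m_i(x), with Pi = tilde P_i and Pj = tilde P_{3-i} *)
Definition mfun (n : nat) (Pi Pj : 'M[C]_n) (x : 'cV[C]_n) : R :=
  let a := complex.Re (qform (1%:M + ctr Pi *m Pi) x) in
  let b := complex.Re (qform (Pi + ctr Pi) x) in
  fP Pj * Num.sqrt ((a - b) / (a + b)).

End Defs.

From Pilot Require Import Defs.
From mathcomp Require Import all_boot all_order all_algebra.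
From mathcomp Require Import complex.
From mathcomp Require Import boolp classical_sets reals.
Import Order.TTheory GRing.Theory Num.Theory.
Set Implicit Arguments.
Unset Strict Implicit.
Unset Printing Implicit Defensive.
Local Open Scope ring_scope.
Local Open Scope classical_set_scope.
Local Open Scope complex_scope.

(** For a matrix P with P + P^* positive semidefinite,
    ||(I -+ P) x||^2 = x^*(I + P^*P)x -+ x^*(P + P^* )x, hence
    ||(I - P) x|| <= ||(I + P) x||: the matrix I + P is invertible, its Cayley
    transform (I + P)^-1 (I - P) is a contraction, f(P) <= 1, and
    m_i(x) = f(P~_{3-i}) ||(I - P~_i) x|| / ||(I + P~_i) x|| <= 1.
    Conjugation by Sigma^{1/2} turns Gamma_PPS into
    (I + P~_1)^-1 (I - P~_2) (I + P~_2)^-1 (I - P~_1) = P~_+^-1 P~_-.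
    If this matrix maps x to lambda x and y = (I + P~_2)^-1 (I - P~_1) x, then
    (I + P~_2) y = (I - P~_1) x and (I - P~_2) y = lambda (I + P~_1) x.
    Bounding ||(I - P~_2) y|| by f(P~_2) ||(I + P~_2) y|| gives
    |lambda| <= m_1(x); bounding ||(I - P~_1) x|| by f(P~_1) ||(I + P~_1) x||
    gives |lambda| <= m_2(y). *)

Section SupBounds.
Variable R : realType.

Lemma sup_in_range (E : set R) (c : R) : 0 <= c ->
  (forall r, E r -> 0 <= r <= c) ->
  [/\ 0 <= sup E, sup E <= c & forall r, E r -> r <= sup E].
Proof.
move=> c_ge0 E0c.
have supE_ub r : E r -> r <= sup E.
  by move=> Er; apply: ub_le_sup Er; exists c => s /E0c /andP[].
have [[r Er]|E_empty] := pselect (E !=set0); last first.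
  have -> : E = set0 by apply/seteqP; split=> // r Er; apply: E_empty; exists r.
  by rewrite sup0.
split=> //; first by case/andP: (E0c r Er) => r_ge0 _; apply: le_trans (supE_ub r Er).
by apply: ge_sup; [exists r | move=> s /E0c /andP[]].
Qed.

Lemma sup_le_dominated (A B : set R) : has_ubound B -> 0 <= sup B ->
  (forall a, A a -> exists2 b, B b & a <= b) -> sup A <= sup B.
Proof.
move=> B_ub supB_ge0 AB.
have [A_ne|A_empty] := pselect (A !=set0); last first.
  have -> : A = set0 by apply/seteqP; split=> // a Aa; apply: A_empty; exists a.
  by rewrite sup0.
apply: ge_sup => // a /AB [b Bb ab].
exact: le_trans ab (ub_le_sup B_ub Bb).
Qed.

End SupBounds.

Section MatrixField.
Variables (F : fieldType) (n : nat).
Implicit Types A B : 'M[F]_n.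

Lemma nonunitmx_ker A : A \notin unitmx -> exists2 x : 'cV[F]_n, x != 0 & A *m x = 0.
Proof.
rewrite unitmxE unitfE negbK -det_tr => /det0P [v v_neq0 vA].
by exists v^T; rewrite ?trmx_eq0 // -[A]trmxK -trmx_mul vA trmx0.
Qed.

Lemma eigenvalue_colvec A a :
  eigenvalue A a -> exists2 x : 'cV[F]_n, x != 0 & A *m x = a *: x.
Proof.
rewrite /eigenvalue /eigenspace kermx_eq0 row_free_unit => /nonunitmx_ker [x x_neq0].
by rewrite mulmxBl mul_scalar_mx => /eqP; rewrite subr_eq0 => /eqP; exists x.
Qed.

Lemma mulmx_unit_eq0 A (x : 'cV[F]_n) : A \in unitmx -> (A *m x == 0) = (x == 0).
Proof.
move=> uA; apply/eqP/eqP => [Ax0|->]; last exact: mulmx0.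
by rewrite -(mulKmx uA x) Ax0 mulmx0.
Qed.

Lemma invmxM A B : A \in unitmx -> B \in unitmx ->
  invmx (A *m B) = invmx B *m invmx A.
Proof.
move=> uA uB; have uAB : A *m B \in unitmx by rewrite unitmx_mul uA.
by rewrite -[RHS]mul1mx -(mulVmx uAB) -!mulmxA (mulKVmx uB) (mulmxV uA) mulmx1.
Qed.

Lemma mulmx_conj_cancel (S T M1 N2 M2 N1 : 'M[F]_n) : T *m S = 1%:M -> S *m T = 1%:M ->
  T *m M1 *m T *m (S *m N2 *m S) *m (T *m M2 *m T) *m (S *m N1 *m S) =
  T *m (M1 *m N2 *m M2 *m N1) *m S.
Proof.
move=> TS ST.
have TSK (X : 'M[F]_n) : T *m (S *m X) = X by rewrite mulmxA TS mul1mx.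
have STK (X : 'M[F]_n) : S *m (T *m X) = X by rewrite mulmxA ST mul1mx.
by rewrite -!mulmxA !TSK !STK.
Qed.

End MatrixField.

Section ComplexMatrices.
Variable R : realType.
Local Notation C := R[i].

Lemma cabsE (z : C) : `|z| = (cabs z)%:C.
Proof. by rewrite /cabs normc_def. Qed.

Lemma cabs_ge0 (z : C) : 0 <= cabs z.
Proof. by rewrite -ler0c -cabsE. Qed.

Lemma cabsM (a b : C) : cabs (a * b) = cabs a * cabs b.
Proof. by apply: complexI; rewrite -cabsE normrM !cabsE rmorphM. Qed.

Lemma cabs_eq0 (z : C) : (cabs z == 0) = (z == 0).
Proof. by rewrite -[z == 0]normr_eq0 cabsE; apply/eqP/eqP => [->|[]]. Qed.

Lemma cabs_sqr (z : C) : (cabs z ^+ 2)%:C = Num.conj z * z.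
Proof. by rewrite -normCKC cabsE rmorphXn. Qed.

Lemma ctrM m n p (A : 'M[C]_(m, n)) (B : 'M[C]_(n, p)) :
  ctr (A *m B) = ctr B *m ctr A.
Proof. by rewrite /ctr map_mxM trmx_mul. Qed.

Lemma ctrD m n (A B : 'M[C]_(m, n)) : ctr (A + B) = ctr A + ctr B.
Proof. by apply/matrixP => i j; rewrite !mxE rmorphD. Qed.

Lemma ctrB m n (A B : 'M[C]_(m, n)) : ctr (A - B) = ctr A - ctr B.
Proof. by apply/matrixP => i j; rewrite !mxE rmorphB. Qed.

Lemma ctr1 n : ctr (1%:M : 'M[C]_n) = 1%:M.
Proof. by apply/matrixP => i j; rewrite !mxE rmorph_nat eq_sym. Qed.

Lemma ctrV n (A : 'M[C]_n) : ctr (invmx A) = invmx (ctr A).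
Proof. by rewrite /ctr map_invmx trmx_inv. Qed.

Lemma vnorm_ge0 n (x : 'cV[C]_n) : 0 <= vnorm x.
Proof. exact: sqrtr_ge0. Qed.

Lemma vnorm_nneg n (x : 'cV[C]_n) : vnorm x \is Num.nneg.
Proof. by rewrite nnegrE vnorm_ge0. Qed.

Lemma vnorm_sqr n (x : 'cV[C]_n) : vnorm x ^+ 2 = \sum_(i < n) cabs (x i 0) ^+ 2.
Proof. by rewrite sqr_sqrtr // sumr_ge0 // => i _; rewrite sqr_ge0. Qed.

Lemma vnorm_eq0 n (x : 'cV[C]_n) : (vnorm x == 0) = (x == 0).
Proof.
rewrite -sqrf_eq0 vnorm_sqr psumr_eq0 => [|i _]; last by rewrite sqr_ge0.
apply/allP/eqP => [x0|-> i _]; last by rewrite mxE /cabs normr0 /= expr0n.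
apply/matrixP => i j; rewrite ord1 mxE.
by have /implyP/(_ isT) := x0 i (mem_index_enum _); rewrite sqrf_eq0 cabs_eq0 => /eqP.
Qed.

Lemma vnorm0 n : vnorm (0 : 'cV[C]_n) = 0.
Proof. by apply/eqP; rewrite vnorm_eq0. Qed.

Lemma vnorm_gt0 n (x : 'cV[C]_n) : x != 0 -> 0 < vnorm x.
Proof. by move=> x_neq0; rewrite lt_def vnorm_eq0 x_neq0 vnorm_ge0. Qed.

Lemma vnormZ n (a : C) (x : 'cV[C]_n) : vnorm (a *: x) = cabs a * vnorm x.
Proof.
apply: (@pexpIrn _ 2) => //; rewrite ?nnegrE ?mulr_ge0 ?vnorm_ge0 ?cabs_ge0 //.
rewrite exprMn !vnorm_sqr mulr_sumr; apply: eq_bigr => i _.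
by rewrite mxE cabsM exprMn.
Qed.

Lemma qformD n (A B : 'M[C]_n) x : qform (A + B) x = qform A x + qform B x.
Proof. by rewrite /qform mulmxDr mulmxDl !mxE. Qed.

Lemma qformB n (A B : 'M[C]_n) x : qform (A - B) x = qform A x - qform B x.
Proof. by rewrite /qform mulmxBr mulmxBl !mxE. Qed.

Lemma qform_ctr_mulmx n (A B : 'M[C]_n) x :
  qform (ctr B *m A *m B) x = qform A (B *m x).
Proof. by rewrite /qform ctrM !mulmxA. Qed.

Lemma qform_ctrmul n (M : 'M[C]_n) x :
  qform (ctr M *m M) x = (vnorm (M *m x) ^+ 2)%:C.
Proof.
rewrite /qform mulmxA -ctrM -mulmxA vnorm_sqr rmorph_sum mxE.
by apply: eq_bigr => i _; rewrite -[RHS]/((cabs _ ^+ 2)%:C) cabs_sqr /ctr !mxE.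
Qed.


Lemma opnorm_bounded n (A : 'M[C]_n) (c : R) : 0 <= c ->
    (forall x, vnorm (A *m x) <= c * vnorm x) ->
  [/\ 0 <= opnorm A, opnorm A <= c & forall x, vnorm (A *m x) <= opnorm A * vnorm x].
Proof.
move=> c_ge0 Ac.
pose E := [set r | exists2 x : 'cV[C]_n, x != 0 & r = vnorm (A *m x) / vnorm x].
have E_range r : E r -> 0 <= r <= c.
  move=> [x x_neq0 ->]; rewrite divr_ge0 ?vnorm_ge0 //=.
  by rewrite ler_pdivrMr ?vnorm_gt0.
have [op_ge0 op_le_c op_ub] := sup_in_range c_ge0 E_range.
split=> // x; have [->|x_neq0] := eqVneq x 0.
  by rewrite mulmx0 vnorm0 mulr0.
by rewrite -ler_pdivrMr ?vnorm_gt0 //; apply: op_ub; exists x.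
Qed.

Lemma psd_tildeP n (S P : 'M[C]_n) : hpd S -> psd P -> psd (tildeP S P).
Proof.
move=> [S_herm _] [P_herm P_psd].
have ctr_invS : ctr (invmx S) = invmx S by rewrite ctrV S_herm.
rewrite /psd; have -> : tildeP S P + ctr (tildeP S P) = ctr (invmx S) *m (P + ctr P) *m invmx S.
  by rewrite /tildeP !ctrM ctr_invS !mulmxA mulmxDr mulmxDl.
split=> [|z]; last by rewrite qform_ctr_mulmx.
by rewrite /Defs.hermitian !ctrM P_herm !ctr_invS mulmxA.
Qed.

Lemma hpd_unitmx n (S : 'M[C]_n) : hpd S -> S \in unitmx.
Proof.
case=> _ S_pd; apply/contraT => /nonunitmx_ker [x x_neq0 Sx0].
by have := S_pd x x_neq0; rewrite /qform -mulmxA Sx0 mulmx0 mxE ltxx.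
Qed.

Section Cayley.
Variables (n : nat) (P : 'M[C]_n).
Hypothesis P_psd : psd P.

Lemma vnorm_1subP_sqr x : vnorm ((1%:M - P) *m x) ^+ 2 =
  complex.Re (qform (1%:M + ctr P *m P) x) - complex.Re (qform (P + ctr P) x).
Proof.
rewrite -raddfB -qformB -[LHS]/(complex.Re (_ ^+ 2)%:C) -qform_ctrmul.
by rewrite ctrB ctr1 mulmxBl mul1mx mulmxBr mulmx1 opprB opprD addrACA.
Qed.

Lemma vnorm_1addP_sqr x : vnorm ((1%:M + P) *m x) ^+ 2 =
  complex.Re (qform (1%:M + ctr P *m P) x) + complex.Re (qform (P + ctr P) x).
Proof.
rewrite -raddfD -qformD -[LHS]/(complex.Re (_ ^+ 2)%:C) -qform_ctrmul.
by rewrite ctrD ctr1 mulmxDl mul1mx mulmxDr mulmx1 [ctr P + _]addrC addrACA.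
Qed.

Lemma vnorm_1subP_le x : vnorm ((1%:M - P) *m x) <= vnorm ((1%:M + P) *m x).
Proof.
rewrite -(ler_sqr (vnorm_nneg _) (vnorm_nneg _)).
rewrite [X in X <= _]vnorm_1subP_sqr [X in _ <= X]vnorm_1addP_sqr lerD2l.
have : 0 <= qform (P + ctr P) x by case: P_psd.
by rewrite lecE => /andP[_ /= re_ge0]; rewrite (le_trans _ re_ge0) // oppr_le0.
Qed.

Lemma unitmx_1addP : 1%:M + P \in unitmx.
Proof.
apply/contraT => /nonunitmx_ker [x x_neq0 Px0].
have Qx0 : (1%:M - P) *m x = 0.
  apply/eqP; rewrite -vnorm_eq0 eq_le vnorm_ge0 andbT.
  by rewrite (le_trans (vnorm_1subP_le x)) // Px0 vnorm0.
have two_x : 2%:R *: x = (1%:M + P) *m x + (1%:M - P) *m x.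
  by rewrite mulmxDl mulmxBl mul1mx addrACA subrr addr0 scaler_nat mulr2n.
move/eqP: two_x; rewrite Px0 Qx0 addr0 scaler_eq0 pnatr_eq0.
by rewrite (negbTE x_neq0).
Qed.

Definition cayley := invmx (1%:M + P) *m (1%:M - P).

Lemma cayley_mul_1addP : cayley *m (1%:M + P) = 1%:M - P.
Proof.
have PQ_comm : (1%:M - P) *m (1%:M + P) = (1%:M + P) *m (1%:M - P).
  by rewrite mulmxBl mulmxDl !mul1mx !mulmxDr mulmxN !mulmx1 opprD addrACA.
by rewrite /cayley -mulmxA PQ_comm (mulKmx unitmx_1addP).
Qed.

Lemma cayley_rightE : cayley = (1%:M - P) *m invmx (1%:M + P).
Proof. by rewrite -cayley_mul_1addP -mulmxA (mulmxV unitmx_1addP) mulmx1. Qed.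

Lemma vnorm_cayley_le v : vnorm (cayley *m v) <= vnorm v.
Proof.
rewrite -[v](mulKVmx unitmx_1addP) (mulmxA cayley) cayley_mul_1addP.
exact: vnorm_1subP_le.
Qed.

Let fP_bounds :
  [/\ 0 <= fP P, fP P <= 1 & forall v, vnorm (cayley *m v) <= fP P * vnorm v].
Proof. by apply: opnorm_bounded ler01 _ => v; rewrite mul1r vnorm_cayley_le. Qed.

Lemma fP_ge0 : 0 <= fP P. Proof. by case: fP_bounds. Qed.

Lemma fP_le1 : fP P <= 1. Proof. by case: fP_bounds. Qed.

Lemma vnorm_cayley_le_fP v : vnorm (cayley *m v) <= fP P * vnorm v.
Proof. by case: fP_bounds => _ _; apply. Qed.

End Cayley.

Lemma mfunE n (Pi Pj : 'M[C]_n) x : mfun Pi Pj x =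
  fP Pj * (vnorm ((1%:M - Pi) *m x) / vnorm ((1%:M + Pi) *m x)).
Proof.
rewrite /mfun /= -vnorm_1subP_sqr -vnorm_1addP_sqr -expr_div_n sqrtr_sqr.
by rewrite ger0_norm // divr_ge0 ?vnorm_ge0.
Qed.

Lemma mfun_ge0 n (Pi Pj : 'M[C]_n) x : psd Pj -> 0 <= mfun Pi Pj x.
Proof. by move=> Pj_psd; rewrite mfunE mulr_ge0 ?fP_ge0 ?divr_ge0 ?vnorm_ge0. Qed.

Lemma mfun_le1 n (Pi Pj : 'M[C]_n) x : psd Pi -> psd Pj -> mfun Pi Pj x <= 1.
Proof.
move=> Pi_psd Pj_psd; rewrite mfunE mulr_ile1 ?fP_ge0 ?fP_le1 ?divr_ge0 ?vnorm_ge0 //.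
have [->|D_neq0] := eqVneq (vnorm ((1%:M + Pi) *m x)) 0; first by rewrite invr0 mulr0.
by rewrite ler_pdivrMr ?mul1r ?vnorm_1subP_le // lt_def D_neq0 vnorm_ge0.
Qed.

Section Similarity.
Variables (n : nat) (Sig S : 'M[C]_n).
Hypotheses (S_unit : S \in unitmx) (S_sqr : S *m S = Sig).

Lemma tildePK P : S *m tildeP S P *m S = P.
Proof. by rewrite /tildeP !mulmxA (mulmxV S_unit) mul1mx (mulmxKV S_unit). Qed.

Lemma addSig_tildeP P : Sig + P = S *m (1%:M + tildeP S P) *m S.
Proof. by rewrite mulmxDr mulmxDl mulmx1 S_sqr tildePK. Qed.

Lemma subSig_tildeP P : Sig - P = S *m (1%:M - tildeP S P) *m S.
Proof. by rewrite mulmxBr mulmxBl mulmx1 S_sqr tildePK. Qed.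

Lemma invmx_conj M : M \in unitmx -> invmx (S *m M *m S) = invmx S *m invmx M *m invmx S.
Proof.
move=> M_unit; have SM_unit : S *m M \in unitmx by rewrite unitmx_mul S_unit.
by rewrite (invmxM SM_unit S_unit) (invmxM S_unit M_unit) mulmxA.
Qed.

Lemma Pplus_inv_Pminus (P1 P2 : 'M[C]_n) : psd P1 -> psd P2 ->
  invmx (Pplus P1 P2) *m Pminus P1 P2 =
  invmx (1%:M + P1) *m (1%:M - P2) *m invmx (1%:M + P2) *m (1%:M - P1).
Proof.
move=> P1_psd P2_psd.
rewrite /Pplus /Pminus (invmxM (unitmx_1addP P2_psd) (unitmx_1addP P1_psd)).
rewrite -!mulmxA; congr (_ *m _).
by rewrite !mulmxA -(cayley_rightE P2_psd).
Qed.

Lemma mulmx_invmx_conj (M1 N2 M2 N1 : 'M[C]_n) : M1 \in unitmx -> M2 \in unitmx ->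
  invmx (S *m M1 *m S) *m (S *m N2 *m S) *m invmx (S *m M2 *m S) *m (S *m N1 *m S) =
  invmx S *m (invmx M1 *m N2 *m invmx M2 *m N1) *m S.
Proof.
move=> M1_unit M2_unit; rewrite (invmx_conj M1_unit) (invmx_conj M2_unit).
exact: mulmx_conj_cancel (mulVmx S_unit) (mulmxV S_unit).
Qed.

Lemma Gamma_PPS_similar (P1 P2 : 'M[C]_n) :
  psd (tildeP S P1) -> psd (tildeP S P2) ->
  Gamma_PPS Sig P1 P2 = invmx S *m
    (invmx (Pplus (tildeP S P1) (tildeP S P2)) *m Pminus (tildeP S P1) (tildeP S P2)) *m S.
Proof.
move=> Pt1_psd Pt2_psd.
rewrite /Gamma_PPS (subSig_tildeP P1) (subSig_tildeP P2) (addSig_tildeP P1) (addSig_tildeP P2).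
rewrite (mulmx_invmx_conj _ _ (unitmx_1addP Pt1_psd) (unitmx_1addP Pt2_psd)).
by rewrite (Pplus_inv_Pminus Pt1_psd Pt2_psd).
Qed.

End Similarity.

Section EigenvalueBound.
Variables (n : nat) (P1 P2 : 'M[C]_n) (x : 'cV[C]_n) (l : C).
Hypotheses (P1_psd : psd P1) (P2_psd : psd P2) (x_neq0 : x != 0).
Hypothesis eig_x : invmx (Pplus P1 P2) *m Pminus P1 P2 *m x = l *: x.

Let y := invmx (1%:M + P2) *m (1%:M - P1) *m x.

Let addP2_y : (1%:M + P2) *m y = (1%:M - P1) *m x.
Proof. by rewrite /y -mulmxA mulKVmx ?unitmx_1addP. Qed.

Let subP2_y : (1%:M - P2) *m y = l *: ((1%:M + P1) *m x).
Proof.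
move: eig_x; rewrite (Pplus_inv_Pminus P1_psd P2_psd) => /(congr1 (mulmx (1%:M + P1))).
rewrite scalemxAr -!mulmxA (mulKVmx (unitmx_1addP P1_psd)) => <-.
by rewrite /y !mulmxA.
Qed.

Let vnorm_addP1_x_gt0 : 0 < vnorm ((1%:M + P1) *m x).
Proof. by rewrite vnorm_gt0 // mulmx_unit_eq0 ?unitmx_1addP. Qed.

Let vnorm_subP2_y : vnorm ((1%:M - P2) *m y) = cabs l * vnorm ((1%:M + P1) *m x).
Proof. by rewrite subP2_y vnormZ. Qed.

Lemma eigenvalue_le_mfun1 : cabs l <= mfun P1 P2 x.
Proof.
rewrite mfunE mulrA (ler_pdivlMr _ _ vnorm_addP1_x_gt0) -vnorm_subP2_y -addP2_y.
by rewrite -(cayley_mul_1addP P2_psd) -mulmxA vnorm_cayley_le_fP.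
Qed.

Lemma eigenvalue_le_mfun2 : cabs l <= mfun P2 P1 y.
Proof.
have [D0|D_neq0] := eqVneq (vnorm ((1%:M + P2) *m y)) 0.
  have : vnorm ((1%:M - P2) *m y) <= 0 by rewrite -D0 vnorm_1subP_le.
  rewrite vnorm_subP2_y pmulr_lle0 // => l_le0.
  exact: le_trans l_le0 (mfun_ge0 _ _ P1_psd).
have D_gt0 : 0 < vnorm ((1%:M + P2) *m y) by rewrite lt_def D_neq0 vnorm_ge0.
rewrite mfunE mulrA (ler_pdivlMr _ _ D_gt0) vnorm_subP2_y.
rewrite mulrCA ler_wpM2l ?cabs_ge0 // addP2_y.
by rewrite -(cayley_mul_1addP P1_psd) -mulmxA vnorm_cayley_le_fP.
Qed.

End EigenvalueBound.

Lemma Gamma_PPS_eigenvalue n (Sig S P1 P2 : 'M[C]_n) l :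
  hpd S -> S *m S = Sig -> psd P1 -> psd P2 -> eigenvalue (Gamma_PPS Sig P1 P2) l ->
  let Pt1 := tildeP S P1 in let Pt2 := tildeP S P2 in
  exists2 x, ev (invmx (Pplus Pt1 Pt2) *m Pminus Pt1 Pt2) x &
    cabs l <= Order.min (mfun Pt1 Pt2 x)
                        (mfun Pt2 Pt1 (invmx (1%:M + Pt2) *m (1%:M - Pt1) *m x)).
Proof.
move=> S_hpd S_sqr P1_psd P2_psd /eigenvalue_colvec [x0 x0_neq0 Gx0] Pt1 Pt2.
have S_unit := hpd_unitmx S_hpd.
have [Pt1_psd Pt2_psd] := (psd_tildeP S_hpd P1_psd, psd_tildeP S_hpd P2_psd).
have Sx0_neq0 : S *m x0 != 0 by rewrite mulmx_unit_eq0.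
have eig_Sx0 : invmx (Pplus Pt1 Pt2) *m Pminus Pt1 Pt2 *m (S *m x0) = l *: (S *m x0).
  move: Gx0; rewrite (Gamma_PPS_similar S_unit S_sqr Pt1_psd Pt2_psd).
  by move=> /(congr1 (mulmx S)); rewrite !mulmxA (mulmxV S_unit) mul1mx scalemxAr.
exists (S *m x0); first by split=> //; exists l.
rewrite le_min; apply/andP; split.
  exact: eigenvalue_le_mfun1 Pt1_psd Pt2_psd Sx0_neq0 eig_Sx0.
exact: eigenvalue_le_mfun2 Pt1_psd Pt2_psd Sx0_neq0 eig_Sx0.
Qed.

End ComplexMatrices.

Theorem theorem3p2 (R : realType) (n : nat) (A P1 P2 Sig S : 'M[R[i]]_n) :
  A \in unitmx -> A = P1 + P2 -> psd P1 -> psd P2 ->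
  hpd Sig -> hpd S -> S *m S = Sig ->
  let Pt1 := tildeP S P1 in
  let Pt2 := tildeP S P2 in
  let Gam := Gamma_PPS Sig P1 P2 in
  let E := ev (invmx (Pplus Pt1 Pt2) *m Pminus Pt1 Pt2) in
  let yv := fun x : 'cV[R[i]]_n => invmx (1%:M + Pt2) *m (1%:M - Pt1) *m x in
  let m1 := mfun Pt1 Pt2 in
  let m2 := mfun Pt2 Pt1 in
  (forall x : 'cV[R[i]]_n, x != 0 -> m1 x <= 1 /\ m2 x <= 1) /\
  (forall l : R[i], l \in spectrum Gam ->
     exists2 x, x \in E & cabs l <= Order.min (m1 x) (m2 (yv x))) /\
  specrad Gam <= sup [set Order.min (m1 x) (m2 (yv x)) | x in E] /\
  sup [set Order.min (m1 x) (m2 (yv x)) | x in E] <= 1.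
Proof.
move=> _ _ P1_psd P2_psd _ S_hpd S_sqr Pt1 Pt2 Gam E yv m1 m2.
have Pt1_psd : psd Pt1 := psd_tildeP S_hpd P1_psd.
have Pt2_psd : psd Pt2 := psd_tildeP S_hpd P2_psd.
have eig_bound l : l \in spectrum Gam ->
    exists2 x, x \in E & cabs l <= Order.min (m1 x) (m2 (yv x)).
  rewrite in_setE => /(Gamma_PPS_eigenvalue S_hpd S_sqr P1_psd P2_psd) [x Ex le_lx].
  by exists x => //; apply: mem_set.
have m_range r : [set Order.min (m1 x) (m2 (yv x)) | x in E] r -> 0 <= r <= 1.
  by move=> [x _ <-]; rewrite le_min !mfun_ge0 //= ge_min mfun_le1.
have [sup_ge0 sup_le1 sup_ub] := sup_in_range ler01 m_range.
split; first by move=> x _; split; apply: mfun_le1.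
split=> //; split=> //.
apply: sup_le_dominated => //; first by exists 1 => r /m_range /andP[].
move=> _ [l /mem_set /eig_bound [x /set_mem Ex le_lx] <-].
by exists (Order.min (m1 x) (m2 (yv x))); first exists x.
Qed.
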